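(* Let $M$ be the All Attack Structure for a plant $G$, observable events $\Sigma_o$, supervisor $S$ realized by $H$, vulnerable events $\Sigma_v$, and secret initial states $X_{sec}\subseteq X_0$. If $q_e$ is a positive (respectively, negative) detected environment state of $M$, then every environment state of $M$ reachable from $q_e$ is a positive (respectively, negative) detected state.
   Context: A plant is a finite automaton $G=(X,\Sigma,\delta,X_0)$ with partial transition function $\delta$ (extended to strings) and initial states $X_0\subseteq X$; $\Sigma=\Sigma_o\dot\cup\Sigma_{uo}$. A supervisor $S$ is realized by a deterministic automaton $H=(Z,\Sigma,\xi,z_0)$ (its control decision after a string leading $H$ to $z$ is $\Delta_H(z)$, the set of events defined at $z$; only observable events change the state of $H$). $\Sigma_v\subseteq\Sigma_o$ are vulnerable events and $X_{sec}\subseteq X_0$ secret initial states. Operators: for $q\subseteq X$, $\gamma\subseteq\Sigma$, $\sigma\in\Sigma_o$: $\textsf{UR}_\gamma(q)=\{\delta(x,s):x\in q,s\in(\Sigma_{uo}\cap\gamma)^*\}$, $\textsf{NX}_\sigma(q)=\{\delta(x,\sigma):x\in q\}$, $\textsf{NX}_\epsilon(q)=q$, $\mathcal{O}(q,\gamma)=\{\sigma\in\Sigma_o\cap\gamma:\exists x\in q,\exists w\in(\Sigma_{uo}\cap\gamma)^*,\delta(x,w\sigma)\text{ defined}\}$. Augmented system: states $\tilde X\subseteq X_0\times X$, $\tilde X_0=\{(x_0,x_0):x_0\in X_0\}$, $\tilde\delta((x_0,x),\sigma)=(x_0,\delta(x,\sigma))$; $\widetilde{\textsf{UR}},\widetilde{\textsf{NX}},\mathcal{O}(\tilde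 q,\gamma)$ defined analogously. $I(\tilde q)=\{x_0:(x_0,x)\in\tilde q\text{ for some }x\}$. All Attack Structure: for $\sigma\in\Sigma_o$, $\hat\sigma$ is a doctored copy, $\hat\epsilon$ an erasure symbol; $\mathcal{V}(\sigma)=\{\hat\sigma':\sigma'\in\Sigma_v\}\cup\{\hat\epsilon\}$ if $\sigma\in\Sigma_v$, else $\{\hat\sigma\}$. $M=(Q,\Sigma_M,f,q_0)$, $q_0=(X_0,\tilde X_0,z_0)$, states reachable from $q_0$, $Q=Q_e\dot\cup Q_a$: environment states $(q,\tilde q,z)$ with $q\subseteq X,\tilde q\subseteq\tilde X,z\in Z\cup\{z_{\textsf{att}}\}$ ($z_{\textsf{att}}$ new, $\Delta_H(z_{\textsf{att}})=\emptyset$); attack states $(q,\tilde q,z,\sigma)$. At $(q,\tilde q,z)$ enabled events are $\mathcal{O}(\tilde q,\Delta_H(z))$ if $z\in Z$, none if $z=z_{\textsf{att}}$, with $f((q,\tilde q,z),\sigma)=(q,\tilde q,z,\sigma)$. At $(q,\tilde q,z,\sigma)$ enabled events are $\mathcal{V}(\sigma)$, with $f((q,\tilde q,z,\sigma),\hat\sigma_a)=(q',\tilde q',z')$, $q'=\textsf{NX}_{\sigma_a}(\textsf{UR}_{\Delta_H(z)}(q))$, $\tilde q'=\widetilde{\textsf{NX}}_\sigma(\widetilde{\textsf{UR}}_{\Delta_H(z)}(\tilde q))$, $z'=\xi(z,\sigma_a)$ if $q'\ne\emptyset$ (with $\xi(z,\epsilon)=z$), $z'=z_{\textsf{att}}$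 otherwise. An environment state $(q,\tilde q,z)$ is a positive detected state if $I(\tilde q)\subseteq X_{sec}$, and a negative detected state if $I(\tilde q)\cap X_{sec}=\emptyset$. *)

From mathcomp Require Import all_boot.
Set Implicit Arguments. Unset Strict Implicit. Unset Printing Implicit Defensive.

Section AAS.
Variables (X Sigma Z : finType).
(* plant G = (X, Sigma, delta, X0): partial transition function *)
Variable delta : X -> Sigma -> option X.
Variable X0 : {set X}.
Variable So : {set Sigma}.               (* observable events; Sigma_uo = ~: So *)
(* supervisor automaton H = (Z, Sigma, xi, z0) *)
Variable xi : Z -> Sigma -> option Z.
Variable z0 : Z.
Variable Sv : {set Sigma}.
Variable Xsec : {set X}.

(* states of H extended with z_att, encoded as None *)
Definition zatt : option Z := None.

Definition DeltaH (z : option Z) : {set Sigma} :=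
  if z is Some z then [set e | xi z e != None] else set0.

Definition uo_step (gamma : {set Sigma}) : rel X :=
  fun x y => [exists e, [&& e \in gamma, e \notin So & delta x e == Some y]].

Definition UR (gamma : {set Sigma}) (q : {set X}) : {set X} :=
  [set y | [exists x in q, connect (uo_step gamma) x y]].

(* NX_sigma(q); NX_eps(q) = q is encoded with option Sigma *)
Definition NX (s : option Sigma) (q : {set X}) : {set X} :=
  if s is Some s then [set y | [exists x in q, delta x s == Some y]] else q.

(* augmented system, states in X0 * X (as pairs (x0, x)) *)
Definition tX0 : {set X * X} := [set (x, x) | x in X0].

Definition tUR (gamma : {set Sigma}) (tq : {set X * X}) : {set X * X} :=
  [set p | [exists p0 in tq, (p0.1 == p.1) && connect (uo_step gamma) p0.2 p.2]].

Definition tNX (s : option Sigma) (tq : {set X * X}) : {set X * X} :=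
  if s is Some s then
    [set p | [exists p0 in tq, (p0.1 == p.1) && (delta p0.2 s == Some p.2)]]
  else tq.

Definition Obs (tq : {set X * X}) (gamma : {set Sigma}) : {set Sigma} :=
  [set s in So :&: gamma |
    [exists p in tq, exists y, connect (uo_step gamma) p.2 y && (delta y s != None)]].

Definition Iset (tq : {set X * X}) : {set X} := [set p.1 | p in tq].

(* attack options V(sigma): None encodes the erasure hat-eps, Some s' the doctored hat-s' *)
Definition Vset (s : Sigma) : {set option Sigma} :=
  if s \in Sv then [set None] :|: [set Some s' | s' in Sv] else [set Some s].

Inductive MState : Type :=
| Env of {set X} & {set X * X} & option Z
| Att of {set X} & {set X * X} & option Z & Sigma.

(* transition relation of M (labels existentially quantified) *)
Inductive Mstep : MState -> MState -> Prop :=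
| step_env q tq z s :
    s \in Obs tq (DeltaH z) ->
    Mstep (Env q tq z) (Att q tq z s)
| step_att q tq z s a :
    a \in Vset s ->
    let q' := NX a (UR (DeltaH z) q) in
    let tq' := tNX (Some s) (tUR (DeltaH z) tq) in
    let z' := if q' != set0 then
                (match z with
                 | Some zz => (if a is Some sa then xi zz sa else Some zz)
                 | None => None end)
              else zatt in
    Mstep (Att q tq z s) (Env q' tq' z').

Inductive Mreach : MState -> MState -> Prop :=
| reach_refl m : Mreach m m
| reach_step m1 m2 m3 : Mstep m1 m2 -> Mreach m2 m3 -> Mreach m1 m3.

Definition q0M : MState := Env X0 tX0 (Some z0).

Definition positive_detected (m : MState) : Prop :=
  if m is Env q tq z then Iset tq \subset Xsec else False.
Definition negative_detected (m : MState) : Prop :=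
  if m is Env q tq z then [disjoint Iset tq & Xsec] else False.

End AAS.
Arguments Env {X Sigma Z} _ _ _.
Arguments Att {X Sigma Z} _ _ _ _.

From mathcomp Require Import all_boot.

(* The augmented system never changes the first component (x0, _) of its
   states, so neither unobservable reach nor an observed step can create a new
   initial-state estimate: along every path of M the set I(tq) only shrinks.
   Inclusion in X_sec and disjointness from X_sec are both inherited by
   subsets. *)

Section AugmentedEstimate.
Variables (X Sigma Z : finType) (delta : X -> Sigma -> option X).
Variables (So : {set Sigma}) (xi : Z -> Sigma -> option Z) (Sv : {set Sigma}).

Lemma Iset_tUR (gamma : {set Sigma}) (tq : {set X * X}) :
  Iset (tUR delta So gamma tq) \subset Iset tq.
Proof.
apply/subsetP=> _ /imsetP [p /[!inE] /existsP [p0 /andP [tq_p0 /andP [/eqP <- _]]] ->].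
exact: imset_f.
Qed.

Lemma Iset_tNX (s : option Sigma) (tq : {set X * X}) :
  Iset (tNX delta s tq) \subset Iset tq.
Proof.
case: s => [s|] /=; last exact: subxx.
apply/subsetP=> _ /imsetP [p /[!inE] /existsP [p0 /andP [tq_p0 /andP [/eqP <- _]]] ->].
exact: imset_f.
Qed.

Definition aug_estimate (m : MState X Sigma Z) : {set X * X} :=
  match m with Env _ tq _ | Att _ tq _ _ => tq end.

Lemma Mstep_Iset_sub (m1 m2 : MState X Sigma Z) :
  Mstep delta So xi Sv m1 m2 ->
  Iset (aug_estimate m2) \subset Iset (aug_estimate m1).
Proof.
case=> [q tq z s _ | q tq z s a _]; first exact: subxx.
exact: subset_trans (Iset_tNX _ _) (Iset_tUR _ _).
Qed.

Lemma Mreach_Iset_sub (m1 m2 : MState X Sigma Z) :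
  Mreach delta So xi Sv m1 m2 ->
  Iset (aug_estimate m2) \subset Iset (aug_estimate m1).
Proof.
elim=> [m | m1' m2' m3' step12 _ sub23]; first exact: subxx.
exact: subset_trans sub23 (Mstep_Iset_sub _ _ step12).
Qed.

End AugmentedEstimate.

Theorem proposition3
  (X Sigma Z : finType) (delta : X -> Sigma -> option X) (X0 : {set X})
  (So : {set Sigma}) (xi : Z -> Sigma -> option Z) (z0 : Z)
  (Sv : {set Sigma}) (Xsec : {set X})
  (H_uo : forall z e, e \notin So -> xi z e != None -> xi z e = Some z)
  (HSv : Sv \subset So) (HXsec : Xsec \subset X0)
  (qe : {set X}) (tqe : {set X * X}) (ze : option Z) :
  Mreach delta So xi Sv (q0M Sigma X0 z0) (@Env X Sigma Z qe tqe ze) ->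
  forall (q : {set X}) (tq : {set X * X}) (z : option Z),
    Mreach delta So xi Sv (@Env X Sigma Z qe tqe ze) (@Env X Sigma Z q tq z) ->
    (positive_detected Xsec (@Env X Sigma Z qe tqe ze) -> positive_detected Xsec (@Env X Sigma Z q tq z)) /\
    (negative_detected Xsec (@Env X Sigma Z qe tqe ze) -> negative_detected Xsec (@Env X Sigma Z q tq z)).
Proof.
move=> _ q tq z /Mreach_Iset_sub /= shrink; split=> /= detected.
- exact: subset_trans shrink detected.
- exact: disjointWl shrink detected.
Qed.
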